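(* Let $G$ be a graph, $C\subseteq V(G)$, $\mathcal{B}=\{N_G[v]: v\in C\}$, and $k$ a positive integer. Let $X\subseteq V(G)$ and let $A=\{A_1,\ldots,A_\ell\}$ be a subset of the connected components of $G-X$ with $\max_{i\in[\ell]}|V(A_i)|=t$. If $\ell>(|X|+t)\cdot 2^{(|X|+t)^2}\cdot 2^{2t+|X|+1}$, then there exists $i\in[\ell]$ such that, with $G'=G-V(A_i)$ and $\mathcal{B}'=\{N_{G'}[v]: v\in C\setminus V(A_i)\}$, we have NCTD$^+(\mathcal{B})\le k$ if and only if NCTD$^+(\mathcal{B}')\le k$ (in $G'$).
   Context: $N_G[v]$ is the closed neighborhood of $v$ in $G$. A positive teaching map for a set $\mathcal{B}$ of closed neighborhoods assigns to each $B\in\mathcal{B}$ a set $T(B)\subseteq B$. A vertex $w$ distinguishes $B,B'$ if $w$ lies in exactly one of $B,B'$. $T$ is non-clashing if for all distinct $B,B'\in\mathcal{B}$ some $w\in T(B)\cup T(B')$ distinguishes $B$ and $B'$; its size is $\max_{B\in\mathcal{B}}|T(B)|$. NCTD$^+(\mathcal{B})$ is the minimum size of a positive non-clashing teaching map for $\mathcal{B}$. $[\ell]=\{1,\ldots,\ell\}$. *)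

From mathcomp Require Import all_boot.
Set Implicit Arguments. Unset Strict Implicit. Unset Printing Implicit Defensive.

Definition simple_graph (V : finType) (e : rel V) : Prop :=
  symmetric e /\ irreflexive e.

Definition cnbhd (V : finType) (e : rel V) (v : V) : {set V} :=
  [set u | (u == v) || e v u].

Definition distinguishes (V : finType) (w : V) (B B' : {set V}) : bool :=
  (w \in B) != (w \in B').

(* NCTD^+(F) <= k : there is a positive non-clashing teaching map of size <= k. *)
Definition nctdp_le (V : finType) (F : {set {set V}}) (k : nat) : Prop :=
  exists T : {set V} -> {set V},
    (forall B, B \in F -> T B \subset B /\ #|T B| <= k) /\
    (forall B B', B \in F -> B' \in F -> B != B' ->
       exists2 w, w \in T B :|: T B' & distinguishes w B B').

Definition induced_rel (V : finType) (e : rel V) (S : {set V}) : rel V :=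
  [rel x y | [&& e x y, x \in S & y \in S]].

Definition is_component (V : finType) (e : rel V) (X S : {set V}) : Prop :=
  [/\ S != set0,
      [disjoint S & X],
      (forall x y, x \in S -> y \in S -> connect (induced_rel e S) x y)
    & (forall x y, x \in S -> y \notin X -> e x y -> y \in S)].

From mathcomp Require Import all_boot zify.
From Stdlib Require Import Classical.
Set Implicit Arguments. Unset Strict Implicit. Unset Printing Implicit Defensive.

(* Classify the components of A by their isomorphism type over X (size,
   internal edges, edges to X, membership in C); by pigeonhole some type class
   K has at least 2^|X| + 2 members, and deleting a suitable member S of K
   preserves the answer.
   If the truncated family has a teaching map T', teach a vertex u of S with the
   image of T' at its copy in another member Sj: choose Sj so that every vertex
   of Sj in C has a teaching set leaving X. This excludes at most 2^|X| members,
   since two such vertices in different members must be told apart by a vertex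
   of X, so their traces on X differ.
   Conversely, from a teaching map T choose S such that no x in X has T(N[x])
   meeting S and no other member of K (this excludes at most |X| members); for
   x in X, the part of T(N[x]) inside S is moved to a copy Sj, and a member of
   K other than S and Sj met by T(N[x]) still tells x apart from the vertices
   of Sj. *)

Lemma in_cnbhd (V : finType) (e : rel V) u d : (d \in cnbhd e u) = (d == u) || e u d.
Proof. by rewrite inE. Qed.

Lemma cnbhdC (V : finType) (e : rel V) u d : symmetric e ->
  (d \in cnbhd e u) = (u \in cnbhd e d).
Proof. by move=> esym; rewrite !in_cnbhd eq_sym esym. Qed.

Lemma distinguishesC (V : finType) (w : V) (B B' : {set V}) :
  distinguishes w B B' = distinguishes w B' B.
Proof. by rewrite /distinguishes eq_sym. Qed.

Lemma distinguishesD (V : finType) (S B B' : {set V}) w : w \notin S ->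
  distinguishes w (B :\: S) (B' :\: S) = distinguishes w B B'.
Proof. by move=> wS; rewrite /distinguishes !inE (negPf wS). Qed.

Section VertexTeaching.
Variables (V : finType) (nb : V -> {set V}).

Definition separates (Tv : V -> {set V}) u1 u2 :=
  exists2 w, w \in Tv u1 :|: Tv u2 & distinguishes w (nb u1) (nb u2).

Lemma separatesC Tv u1 u2 : separates Tv u1 u2 -> separates Tv u2 u1.
Proof. by case=> w; rewrite setUC distinguishesC; exists w. Qed.

Definition vteaching (D : {set V}) (k : nat) (Tv : V -> {set V}) : Prop :=
  (forall u, u \in D -> Tv u \subset nb u /\ #|Tv u| <= k) /\
  (forall u1 u2, u1 \in D -> u2 \in D -> nb u1 != nb u2 -> separates Tv u1 u2).

Lemma nctdp_le_vteaching (D : {set V}) (k : nat) :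
  nctdp_le [set nb v | v in D] k <-> exists Tv, vteaching D k Tv.
Proof.
split=> [[T [Tsub Tncl]]|[Tv [Tvsub Tvncl]]].
  exists (T \o nb); split=> [u uD | u1 u2 u1D u2D]; first exact/Tsub/imset_f.
  by apply: Tncl; apply: imset_f.
pose T Y := if [pick v in D | nb v == Y] is Some u then Tv u else set0.
have TE Y : Y \in [set nb v | v in D] -> exists2 u, u \in D & Y = nb u /\ T Y = Tv u.
  case/imsetP=> v vD ->; rewrite /T; case: pickP => [u /andP [uD /eqP <-]|].
    by exists u.
  by move/(_ v); rewrite vD eqxx.
exists T; split=> [Y /TE [u uD [-> ->]] | Y1 Y2 /TE [u1 u1D [-> ->]] /TE [u2 u2D [-> ->]]].
  exact: Tvsub.
exact: Tvncl.
Qed.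

End VertexTeaching.

Lemma exists_unwitnessed (U W Y : finType) (K : {set U}) (P : U -> W -> bool)
    (h : W -> Y) (R : {set Y}) :
  (forall S v, S \in K -> P S v -> h v \in R) ->
  (forall S1 S2 v1 v2, S1 \in K -> S2 \in K -> P S1 v1 -> P S2 v2 ->
     h v1 = h v2 -> S1 = S2) ->
  #|R| < #|K| -> exists2 S, S \in K & forall v, ~~ P S v.
Proof.
move=> hR hinj ltRK.
have [S /andP [SK /forallP noP]|allP] := pickP [pred S in K | [forall v, ~~ P S v]].
  by exists S.
have witP S : S \in K -> exists v, [pick v | P S v] = Some v /\ P S v.
  move=> SK; case: pickP => [v Pv|noW]; first by exists v.
  by move: (allP S); rewrite /= SK => /negbT/forallPn [v]; rewrite noW.
pose img S := omap h [pick v | P S v].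
have img_inj : {in K &, injective img}.
  move=> S1 S2 S1K S2K; have [v1 [E1 P1]] := witP _ S1K; have [v2 [E2 P2]] := witP _ S2K.
  by rewrite /img E1 E2 => -[]; apply: hinj.
move: ltRK; rewrite ltnNge -(card_in_imset img_inj) -(card_imset R (@Some_inj _)).
case/negP; apply/subset_leq_card/subsetP => _ /imsetP [S /[dup] SK /witP [v [Sv Pv]] ->].
by rewrite /img Sv /=; apply: imset_f; apply: hR Pv.
Qed.

Section Components.
Variables (V : finType) (e : rel V) (X : {set V}).
Local Notation N := (cnbhd e).
Local Notation component := (is_component e X).

Lemma component_notin S d : component S -> d \in S -> d \notin X.
Proof. by case=> _ dis _ _ dS; rewrite (disjointFr dis dS). Qed.

Lemma component_nbhd S u d : component S -> u \in S -> d \in N u -> d \notin X -> d \in S.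
Proof. by case=> _ _ _ cl uS; rewrite in_cnbhd => /orP [/eqP -> //|/(cl _ _ uS)]. Qed.

Lemma component_sub S1 S2 z : component S1 -> component S2 ->
  z \in S1 -> z \in S2 -> S1 \subset S2.
Proof.
move=> c1 [_ _ _ cl2] z1 z2; apply/subsetP => y y1.
have [_ _ conn1 _] := c1; have /connectP [p pth ->] := conn1 _ _ z1 y1.
elim: p z z1 z2 pth => //= a p IH z z1 z2 /andP [/and3P [eza _ a1] pth].
exact: IH a1 (cl2 _ _ z2 (component_notin c1 a1) eza) pth.
Qed.

Lemma component_eq S1 S2 z : component S1 -> component S2 ->
  z \in S1 -> z \in S2 -> S1 = S2.
Proof.
move=> c1 c2 z1 z2; apply/eqP; rewrite eqEsubset.
by rewrite (component_sub c1 c2 z1 z2) (component_sub c2 c1 z2 z1).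
Qed.

Hypothesis esym : symmetric e.

Lemma component_nbhd_out S w d : component S -> w \notin S -> w \notin X ->
  d \in S -> d \notin N w.
Proof.
move=> cS wS wX dS; apply: contra wS; rewrite in_cnbhd => /orP [/eqP <- //|ewd].
by apply: component_nbhd cS dS _ wX; rewrite in_cnbhd esym ewd orbT.
Qed.

End Components.

Section IsoOver.
Variables (V : finType) (e : rel V) (C X : {set V}).
Local Notation N := (cnbhd e).
Local Notation component := (is_component e X).

(* Extended by the identity on [X], [f] embeds G[Sa :|: X] into G[Sb :|: X]. *)
Definition iso_over (Sa Sb : {set V}) (f g : V -> V) :=
  [/\ {in Sa, forall s, f s \in Sb}, {in Sa, forall s, g (f s) = s},
      {in Sa &, forall s s', e (f s) (f s') = e s s'},
      {in X, forall x, {in Sa, forall s, e x (f s) = e x s}}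
    & {in Sa, forall s, (f s \in C) = (s \in C)}].

Definition patch (f : V -> V) (S : {set V}) d := if d \in S then f d else d.

Variables (Sa Sb : {set V}) (f g : V -> V).
Hypotheses (ca : component Sa) (cb : component Sb) (iso : iso_over Sa Sb f g).

Lemma iso_nbhdX x d : x \in X -> d \in Sa -> (f d \in N x) = (d \in N x).
Proof.
case: iso => fS _ _ fX _ xX dS; rewrite !in_cnbhd fX //.
have /negPf -> : f d != x by apply: contraTneq xX => <-; exact: component_notin cb (fS _ dS).
by have /negPf -> : d != x by apply: contraTneq xX => <-; exact: component_notin ca dS.
Qed.

Lemma iso_patch_nbhdX x d : x \in X -> (patch f Sa d \in N x) = (d \in N x).
Proof. by move=> xX; rewrite /patch; case: ifP => // dS; apply: iso_nbhdX. Qed.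

Hypothesis esym : symmetric e.

Lemma iso_nbhd_patch u d : u \in Sa -> (d \in Sa) || (d \in X) ->
  (patch f Sa d \in N (f u)) = (d \in N u).
Proof.
case: iso => fS gf fe _ _ uS dSX; rewrite /patch; case: ifP => dS.
  rewrite !in_cnbhd fe //; congr (_ || _).
  by apply/eqP/eqP => [E|-> //]; rewrite -(gf d dS) E gf.
rewrite dS /= in dSX.
by rewrite !(cnbhdC _ d) // iso_nbhdX.
Qed.

End IsoOver.

Section IsoFamily.
Variables (V : finType) (e : rel V) (C X : {set V}).
Hypothesis esym : symmetric e.
Local Notation N := (cnbhd e).
Variables (K : {set {set V}}) (phi : {set V} -> {set V} -> V -> V).
Hypothesis Kcomp : {in K, forall S, is_component e X S}.
Hypothesis Kiso : {in K &, forall Sa Sb, iso_over e C X Sa Sb (phi Sa Sb) (phi Sb Sa)}.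
Hypothesis Kbig : 2 ^ #|X| + 2 <= #|K|.

Lemma family_disjoint Sa Sb d : Sa \in K -> Sb \in K -> Sa != Sb -> d \in Sa -> d \notin Sb.
Proof.
move=> aK bK ab da; apply: contra ab => db.
by rewrite (component_eq (Kcomp aK) (Kcomp bK) da db).
Qed.

Lemma phi_mem Sa Sb s : Sa \in K -> Sb \in K -> s \in Sa -> phi Sa Sb s \in Sb.
Proof. by move=> aK bK; case: (Kiso aK bK) => fS _ _ _ _ /fS. Qed.

Lemma family_nbhd_out Sa Sb u d : Sa \in K -> Sb \in K -> Sa != Sb ->
  u \in Sa -> d \in Sb -> d \notin N u.
Proof.
move=> aK bK ab uSa dSb; have ba : Sb != Sa by rewrite eq_sym.
apply/negP => /(component_nbhd (Kcomp aK) uSa) /(_ (component_notin (Kcomp bK) dSb)).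
exact/negP/(family_disjoint bK aK ba dSb).
Qed.

Lemma exists_other P Q : exists2 S, S \in K & (S != P) && (S != Q).
Proof.
have : 0 < #|K :\: [set P; Q]|.
  rewrite cardsD subn_gt0; apply: leq_ltn_trans (_ : 2 < #|K|); last first.
    by apply: leq_trans Kbig; have := expn_gt0 2 #|X|; lia.
  by apply: leq_trans (subset_leq_card (subsetIr _ _)) _; rewrite cards2; case: (P != Q).
case/card_gt0P => S; rewrite !inE negb_or => /andP [/andP [SP SQ] SK].
by exists S; rewrite ?SP.
Qed.

Lemma exists_avoiding P u : exists2 S, S \in K & (S != P) && (u \notin S).
Proof.
have [Q /andP [QK uQ]|noQ] := pickP [pred Q in K | u \in Q].
  have [S SK /andP [SP SQ]] := exists_other P Q; exists S; rewrite // SP.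
  by apply: family_disjoint uQ; rewrite // eq_sym.
have [S SK /andP [SP _]] := exists_other P P; exists S; rewrite // SP.
by move: (noQ S); rewrite /= SK => /negbT.
Qed.

Lemma truncate_nbhd_sub S u1 u2 d : S \in K -> u1 \notin S -> u2 \notin S ->
  N u1 :\: S = N u2 :\: S -> d \in S -> d \in N u1 -> d \in N u2.
Proof.
move=> SK u1S u2S E dS du1.
have u1X : u1 \in X.
  by apply: contraTT du1 => u1X; apply: component_nbhd_out (Kcomp SK) _ _ dS.
have [Sk SkK /andP [SkS u2Sk]] := exists_avoiding S u2.
have isk := Kiso SK SkK; have dk := phi_mem SK SkK dS.
have : phi S Sk d \in N u2 :\: S.
  by rewrite -E in_setD (family_disjoint SkK SK) // (iso_nbhdX (Kcomp SK) (Kcomp SkK) isk).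
rewrite in_setD => /andP [_]; case u2X : (u2 \in X).
  by rewrite (iso_nbhdX (Kcomp SK) (Kcomp SkK) isk).
by rewrite (negPf (component_nbhd_out esym (Kcomp SkK) u2Sk (negbT u2X) dk)).
Qed.

Lemma truncate_nbhd_inj S u1 u2 : S \in K -> u1 \notin S -> u2 \notin S ->
  N u1 :\: S = N u2 :\: S -> N u1 = N u2.
Proof.
move=> SK u1S u2S E; apply/setP => d; case dS : (d \in S); last first.
  by move/setP: E => /(_ d); rewrite !in_setD dS.
by apply/idP/idP; apply: truncate_nbhd_sub dS.
Qed.

(* If [x] sees [v], the copy of [v] in a third member of [K] is seen by [x] but not by [v]. *)
Lemma truncate_nbhdX_neq S Sj v x : S \in K -> Sj \in K -> Sj != S ->
  v \in Sj -> x \in X -> N v :\: S != N x :\: S.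
Proof.
move=> SK SjK SjS vSj xX; have vS := family_disjoint SjK SK SjS vSj.
case xv : (v \in N x); last first.
  by apply/negP => /eqP /setP /(_ v); rewrite !in_setD vS xv in_cnbhd eqxx.
have [Sk SkK /andP [SkS SkSj]] := exists_other S Sj.
have zk := phi_mem SjK SkK vSj.
apply/negP => /eqP /setP /(_ (phi Sj Sk v)).
rewrite !in_setD (family_disjoint SkK SK) //.
rewrite (iso_nbhdX (Kcomp SjK) (Kcomp SkK) (Kiso SjK SkK) xX vSj).
by rewrite xv (negPf (family_nbhd_out SjK SkK _ vSj zk)) // eq_sym.
Qed.

Section Lift.
Variables (S Sj : {set V}) (k : nat) (Tv : V -> {set V}).
Hypotheses (SK : S \in K) (SjK : Sj \in K) (SjS : Sj != S).
Local Notation NS := (fun v => N v :\: S).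
Hypothesis Tv_teach : vteaching NS (C :\: S) k Tv.
Hypothesis Sj_escapes_X : {in Sj, forall v, v \in C -> ~~ (Tv v \subset X)}.
Local Notation f := (phi S Sj).
Local Notation g := (phi Sj S).

Definition lift_teach u := if u \in S then patch g Sj @: Tv (f u) else Tv u.

Let cS := Kcomp SK.
Let cSj := Kcomp SjK.
Let isf := Kiso SK SjK.
Let isg := Kiso SjK SK.
Let Tv_sub := proj1 Tv_teach.
Let Tv_sep := proj2 Tv_teach.

Let Tv_mem u d : u \in C -> u \notin S -> d \in Tv u -> d \in N u /\ d \notin S.
Proof.
move=> uC uS dT; have uD : u \in C :\: S by rewrite in_setD uS.
have [sub _] := Tv_sub uD.
by move: (subsetP sub d dT); rewrite in_setD => /andP [].
Qed.

Let fS u : u \in S -> f u \in Sj.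
Proof. exact: phi_mem. Qed.

Let f_notin u : u \in S -> f u \notin S.
Proof. by move/fS; apply: family_disjoint. Qed.

Let f_C u : u \in S -> (f u \in C) = (u \in C).
Proof. by case: isf => _ _ _ _ fC /fC. Qed.

Let Tv_copy u d : u \in S -> u \in C -> d \in Tv (f u) ->
  [/\ d \in N (f u), d \notin S & (d \in Sj) || (d \in X)].
Proof.
move=> uS uC dT; have fuC : f u \in C by rewrite f_C.
have [dN dS] := Tv_mem fuC (f_notin uS) dT.
split=> //; case dX : (d \in X); rewrite ?orbT //.
by rewrite (component_nbhd cSj (fS uS) dN) ?dX.
Qed.

Let patch_g_nbhd u d : u \in S -> (d \in Sj) || (d \in X) ->
  (patch g Sj d \in N u) = (d \in N (f u)).
Proof.
case: isf => _ gf _ _ _ uS dSX.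
by rewrite -{1}(gf u uS) (iso_nbhd_patch cSj cS isg esym (fS uS) dSX).
Qed.

Lemma lift_teach_sub u : u \in C -> lift_teach u \subset N u /\ #|lift_teach u| <= k.
Proof.
move=> uC; rewrite /lift_teach; case: ifP => uS.
  have fuD : f u \in C :\: S by rewrite in_setD f_notin // f_C.
  have [_ ck] := Tv_sub fuD; split; last exact: leq_trans (leq_imset_card _ _) ck.
  apply/subsetP => _ /imsetP [d dT ->].
  by have [dN _ dSX] := Tv_copy uS uC dT; rewrite patch_g_nbhd.
have uD : u \in C :\: S by rewrite in_setD uS.
have [sub ck] := Tv_sub uD; split=> //.
by apply/subsetP => d /(Tv_mem uC (negbT uS)) [].
Qed.

Lemma copy_nbhd_neq u1 u2 : u1 \in S -> u2 \in S -> N u1 != N u2 ->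
  N (f u1) :\: S != N (f u2) :\: S.
Proof.
move=> u1S u2S; apply: contra => /eqP E; apply/eqP/setP => d.
case dSX : ((d \in S) || (d \in X)).
  rewrite -(iso_nbhd_patch cS cSj isf esym u1S dSX) -(iso_nbhd_patch cS cSj isf esym u2S dSX).
  have pS : patch f S d \notin S by rewrite /patch; case: ifP => [/f_notin|->].
  by move/setP: E => /(_ (patch f S d)); rewrite !in_setD pS.
move/negbT: dSX; rewrite negb_or => /andP [dS dX].
have outN u : u \in S -> d \in N u = false.
  by move=> uS; apply: contraNF dS => dN; apply: component_nbhd cS uS dN dX.
by rewrite !outN.
Qed.

Lemma lift_sep_in u1 u2 : u1 \in S -> u2 \in S -> u1 \in C -> u2 \in C ->
  N u1 != N u2 -> separates N lift_teach u1 u2.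
Proof.
move=> u1S u2S u1C u2C neq.
have fD u : u \in S -> u \in C -> f u \in C :\: S by move=> uS uC; rewrite in_setD f_notin ?f_C.
have [w wT] := Tv_sep (fD _ u1S u1C) (fD _ u2S u2C) (copy_nbhd_neq u1S u2S neq).
have [wS wSX] : w \notin S /\ (w \in Sj) || (w \in X).
  by case/setUP: wT => /Tv_copy [] // _ wS wSX; split.
rewrite distinguishesD // => wd; exists (patch g Sj w).
  by rewrite /lift_teach u1S u2S; case/setUP: wT => wT; apply/setUP; [left|right]; apply: imset_f.
by rewrite /distinguishes !patch_g_nbhd.
Qed.

Lemma lift_sep_out u1 u2 : u1 \in S -> u1 \in C -> u2 \notin S -> u2 \notin X ->
  separates N lift_teach u1 u2.
Proof.
move=> u1S u1C u2S u2X; have fuC : f u1 \in C by rewrite f_C.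
have /subsetPn [d dT dX] := Sj_escapes_X (fS u1S) fuC.
have [dN _] := Tv_copy u1S u1C dT; rewrite (negPf dX) orbF => dSj.
exists (patch g Sj d); first by rewrite in_setU /lift_teach u1S imset_f.
rewrite /distinguishes patch_g_nbhd ?dSj // dN.
rewrite /patch dSj (negPf (component_nbhd_out esym cS u2S u2X _)) //.
by case: isg => gS _ _ _ _; apply: gS.
Qed.

Lemma lift_sep_X u1 u2 : u1 \in S -> u1 \in C -> u2 \in X -> u2 \in C ->
  separates N lift_teach u1 u2.
Proof.
move=> u1S u1C u2X u2C; have u2S := contraTN (component_notin cS) u2X.
have fuD : f u1 \in C :\: S by rewrite in_setD f_notin ?f_C.
have u2D : u2 \in C :\: S by rewrite in_setD u2S.
have [w wT] := Tv_sep fuD u2D (truncate_nbhdX_neq SK SjK SjS (fS u1S) u2X).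
have wS : w \notin S.
  by case/setUP: wT => [/Tv_copy [] | /(Tv_mem u2C u2S) []].
rewrite distinguishesD //; case/setUP: wT => wT wd.
  have [_ _ wSX] := Tv_copy u1S u1C wT.
  exists (patch g Sj w); first by rewrite in_setU /lift_teach u1S imset_f.
  by rewrite /distinguishes patch_g_nbhd // (iso_patch_nbhdX cSj cS isg).
exists w; first by rewrite in_setU /lift_teach (negPf u2S) wT orbT.
have [wN2 _] := Tv_mem u2C u2S wT.
move: wd; rewrite /distinguishes wN2 !eqb_id; apply: contra => wN1.
case wX : (w \in X).
  have wSX : (w \in S) || (w \in X) by rewrite wX orbT.
  by move: (iso_nbhd_patch cS cSj isf esym u1S wSX); rewrite /patch (negPf wS) wN1.
by move: wS; rewrite (component_nbhd cS u1S wN1) ?wX.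
Qed.

Lemma lift_vteaching : vteaching N C k lift_teach.
Proof.
split=> [u uC | u1 u2 u1C u2C neq]; first exact: lift_teach_sub.
have sep_mixed v1 v2 : v1 \in S -> v1 \in C -> v2 \notin S -> v2 \in C ->
    separates N lift_teach v1 v2.
  move=> v1S v1C v2S v2C; case v2X : (v2 \in X); first exact: lift_sep_X.
  exact: lift_sep_out (negbT v2X).
case u1S : (u1 \in S); case u2S : (u2 \in S).
- exact: lift_sep_in.
- exact: sep_mixed (negbT u2S) u2C.
- by apply: separatesC; apply: sep_mixed; rewrite ?u1S.
have uD u : u \in C -> u \in S = false -> u \in C :\: S by move=> uC uS; rewrite in_setD uS.
have neqS : N u1 :\: S != N u2 :\: S.
  by apply: contra neq => /eqP /(truncate_nbhd_inj SK (negbT u1S) (negbT u2S)) ->.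
have [w wT] := Tv_sep (uD _ u1C u1S) (uD _ u2C u2S) neqS.
have wS : w \notin S by case/setUP: wT => /Tv_mem [] //; rewrite ?u1S ?u2S.
by rewrite distinguishesD // => wd; exists w; rewrite // /lift_teach u1S u2S.
Qed.

End Lift.

Lemma teach_in_X_trace_neq S k Tv v1 v2 :
  vteaching (fun v => N v :\: S) (C :\: S) k Tv -> S \in K ->
  v1 \in C :\: S -> v2 \in C :\: S -> Tv v1 \subset X -> Tv v2 \subset X ->
  N v1 :\: S != N v2 :\: S -> N v1 :&: X != N v2 :&: X.
Proof.
case=> _ Tv_sep SK v1D v2D T1X T2X /(Tv_sep _ _ v1D v2D) [w wT].
have wX : w \in X by case/setUP: wT; apply/subsetP.
rewrite distinguishesD ?(contraTN (component_notin (Kcomp SK))) // => wd.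
by apply: contraNneq wd => /setP /(_ w); rewrite !in_setI wX !andbT /distinguishes => ->.
Qed.

Lemma nctdp_le_lift S k : S \in K ->
  nctdp_le [set N v :\: S | v in C :\: S] k -> nctdp_le [set N v | v in C] k.
Proof.
move=> SK /nctdp_le_vteaching [Tv Tv_teach]; apply/nctdp_le_vteaching.
pose bad (Sj : {set V}) v := [&& v \in Sj, v \in C & Tv v \subset X].
have bad_inj S1 S2 v1 v2 : S1 \in K :\ S -> S2 \in K :\ S -> bad S1 v1 -> bad S2 v2 ->
    N v1 :&: X = N v2 :&: X -> S1 = S2.
  move=> /setD1P [S1S S1K] /setD1P [S2S S2K] /and3P [v1S1 v1C T1X] /and3P [v2S2 v2C T2X].
  have v1S := family_disjoint S1K SK S1S v1S1; have v2S := family_disjoint S2K SK S2S v2S2.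
  apply: contraPeq => S12; apply/eqP/(teach_in_X_trace_neq Tv_teach SK _ _ T1X T2X).
  - by rewrite in_setD v1S.
  - by rewrite in_setD v2S.
  apply/negP => /eqP /setP /(_ v1); rewrite !in_setD v1S in_cnbhd eqxx.
  by rewrite (negPf (family_nbhd_out S2K S1K _ v2S2 v1S1)) // eq_sym.
have bad_img Sj v : Sj \in K :\ S -> bad Sj v -> N v :&: X \in powerset X.
  by move=> _ _; rewrite inE subsetIr.
have few_bad : #|powerset X| < #|K :\ S|.
  by move: Kbig; rewrite card_powerset (cardsD1 S K) SK; lia.
have [Sj] := exists_unwitnessed bad_img bad_inj few_bad.
rewrite in_setD1 => /andP [SjS SjK] good; exists (lift_teach S Sj Tv).
apply: lift_vteaching => // v vSj vC; apply/negP => vX.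
by move: (good v); rewrite /bad vSj vC vX.
Qed.

Section Restrict.
Variables (k : nat) (Tv : V -> {set V}).
Hypothesis Tv_teach : vteaching N C k Tv.
Let Tv_sub := proj1 Tv_teach.
Let Tv_sep := proj2 Tv_teach.

Definition hits x (S : {set V}) := Tv x :&: S != set0.

Definition sole_hit x S := hits x S && [forall S' in K, (S' != S) ==> ~~ hits x S'].

Lemma exists_no_sole_hit : exists2 S, S \in K & forall x, ~~ ((x \in X) && sole_hit x S).
Proof.
apply: (@exists_unwitnessed _ _ _ _ _ id X) => [S x _ /andP [] // | | ].
- move=> S1 S2 x y _ S2K /and3P [_ _ /forall_inP sole1] /and3P [_ hit2 _] /= Exy.
  apply/eqP; apply: contraTT hit2 => S21; rewrite -Exy.
  by apply: (implyP (sole1 S2 S2K)); rewrite eq_sym.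
- by apply: leq_trans Kbig; apply: leq_trans (ltn_expl _ (isT : 1 < 2)) (leq_addr _ _).
Qed.

Variable S : {set V}.
Hypotheses (SK : S \in K) (no_sole : forall x, ~~ ((x \in X) && sole_hit x S)).
Local Notation NS := (fun v => N v :\: S).

Definition copy_target x := [pick Sj in K | (Sj != S) &&
  [exists Si in K, [&& Si != S, Si != Sj & hits x Si]]].

Definition restrict_teach u :=
  if copy_target u is Some Sj then patch (phi S Sj) S @: Tv u else Tv u.

Let cS := Kcomp SK.

Let Tv_N u d : u \in C -> d \in Tv u -> d \in N u.
Proof. by move=> uC; apply/subsetP; case: (Tv_sub uC). Qed.

Lemma Tv_hits_X u d : u \in C -> u \notin S -> d \in Tv u -> d \in S -> u \in X.
Proof.
move=> uC uS dT dS; apply: contraTT (Tv_N uC dT) => uX.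
exact: (component_nbhd_out esym cS uS uX dS).
Qed.

Lemma copy_target_mem x Sj : copy_target x = Some Sj -> Sj \in K /\ Sj != S.
Proof. by rewrite /copy_target; case: pickP => // S' /and3P [S'K S'S _] [<-]. Qed.

Lemma copy_target_spec x w : x \in X -> w \in Tv x -> w \in S ->
  exists Sj, [/\ copy_target x = Some Sj, Sj \in K, Sj != S &
    exists2 Si, Si \in K & [&& Si != S, Si != Sj & hits x Si]].
Proof.
move=> xX wT wS.
have hS : hits x S by apply/set0Pn; exists w; rewrite in_setI wT wS.
have := no_sole x; rewrite xX /sole_hit hS /= => /forall_inPn [Si SiK].
rewrite negb_imply negbK => /andP [SiS hSi].
case Ex: (copy_target x) => [Sj|].
  have [SjK SjS] := copy_target_mem Ex; exists Sj; split=> //.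
  move: Ex; rewrite /copy_target; case: pickP => // S' /and3P [_ _ /exists_inP [Si' Si'K h]] [<-].
  by exists Si'.
have [Sj SjK /andP [SjS SjSi]] := exists_other S Si.
move: Ex; rewrite /copy_target; case: pickP => // /(_ Sj); rewrite /= SjK SjS /=.
by move/negbT/exists_inPn/(_ Si SiK); rewrite SiS hSi eq_sym SjSi.
Qed.

Lemma restrict_keep u w : w \in Tv u -> w \notin S -> w \in restrict_teach u.
Proof.
move=> wT wS; rewrite /restrict_teach; case: (copy_target u) => // Sj.
by apply/imsetP; exists w; rewrite // /patch (negPf wS).
Qed.

Lemma restrict_teach_sub u : u \in C :\: S ->
  restrict_teach u \subset N u :\: S /\ #|restrict_teach u| <= k.
Proof.
rewrite in_setD => /andP [uS uC]; have [_ ck] := Tv_sub uC.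
rewrite /restrict_teach; case E: (copy_target u) => [Sj|]; last first.
  split=> //; apply/subsetP => d dT; rewrite in_setD Tv_N // andbT.
  apply/negP => dS; have [Sj [+ _ _ _]] := copy_target_spec (Tv_hits_X uC uS dT dS) dT dS.
  by rewrite E.
have [SjK SjS] := copy_target_mem E.
split; last exact: leq_trans (leq_imset_card _ _) ck.
apply/subsetP => _ /imsetP [d dT ->]; rewrite in_setD.
case dS : (d \in S); last by rewrite /patch !dS Tv_N.
have uX := Tv_hits_X uC uS dT dS.
rewrite (iso_patch_nbhdX cS (Kcomp SjK) (Kiso SK SjK)) // Tv_N // andbT /patch dS.
exact: family_disjoint SjK SK SjS (phi_mem SK SjK dS).
Qed.

Lemma restrict_sep u1 u2 w : u1 \in C :\: S -> u2 \in C :\: S -> w \in Tv u1 ->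
  distinguishes w (N u1) (N u2) -> separates NS restrict_teach u1 u2.
Proof.
move=> /[dup] u1D /setDP [u1C u1S] /setDP [u2C u2S] wT wd.
have sep_by d : d \in restrict_teach u1 -> d \notin S -> d \in N u1 -> d \notin N u2 ->
    separates NS restrict_teach u1 u2.
  move=> dT dS dN1 dN2; exists d; first by rewrite in_setU dT.
  by rewrite distinguishesD // /distinguishes dN1 (negPf dN2).
have wN1 := Tv_N u1C wT.
have wN2 : w \notin N u2 by move: wd; rewrite /distinguishes wN1; case: (w \in N u2).
case wS : (w \in S); last exact: sep_by (restrict_keep wT (negbT wS)) (negbT wS) wN1 wN2.
have u1X := Tv_hits_X u1C u1S wT wS.
have [Sj [E SjK SjS [Si SiK /and3P [SiS SiSj /set0Pn [z /setIP [zT zSi]]]]]] :=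
  copy_target_spec u1X wT wS.
have isj := Kiso SK SjK; have fw := phi_mem SK SjK wS.
have fwT : phi S Sj w \in restrict_teach u1.
  by rewrite /restrict_teach E; apply/imsetP; exists w; rewrite // /patch wS.
have fwS := family_disjoint SjK SK SjS fw.
have fwN1 : phi S Sj w \in N u1 by rewrite (iso_nbhdX cS (Kcomp SjK) isj).
case u2X : (u2 \in X).
  by apply: sep_by fwT fwS fwN1 _; rewrite (iso_nbhdX cS (Kcomp SjK) isj).
case u2Sj : (u2 \in Sj); last first.
  exact: sep_by fwT fwS fwN1 (component_nbhd_out esym (Kcomp SjK) (negbT u2Sj) (negbT u2X) fw).
have zS := family_disjoint SiK SK SiS zSi.
apply: sep_by (restrict_keep zT zS) zS (Tv_N u1C zT) (family_nbhd_out SjK SiK _ u2Sj zSi).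
by rewrite eq_sym.
Qed.

Lemma restrict_vteaching : vteaching NS (C :\: S) k restrict_teach.
Proof.
split=> [u uD | u1 u2 u1D u2D neq]; first exact: restrict_teach_sub.
have [/setDP [u1C _] /setDP [u2C _]] := (u1D, u2D).
have neqN : N u1 != N u2 by apply: contra neq => /eqP ->.
have [w /setUP [wT|wT] wd] := Tv_sep u1C u2C neqN; first exact: restrict_sep wT wd.
by apply/separatesC/(restrict_sep u2D u1D wT); rewrite distinguishesC.
Qed.

End Restrict.

Lemma nctdp_le_restrict k : nctdp_le [set N v | v in C] k ->
  exists2 S, S \in K & nctdp_le [set N v :\: S | v in C :\: S] k.
Proof.
case/nctdp_le_vteaching => Tv Tv_teach; have [S SK no_sole] := exists_no_sole_hit Tv.
exists S => //; apply/nctdp_le_vteaching; exists (restrict_teach Tv S).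
exact: restrict_vteaching.
Qed.

Lemma iso_family_reduction k : exists2 S, S \in K &
  (nctdp_le [set N v | v in C] k <-> nctdp_le [set N v :\: S | v in C :\: S] k).
Proof.
have [le_B | not_le] := classic (nctdp_le [set N v | v in C] k).
  by have [S SK le_S] := nctdp_le_restrict le_B; exists S.
have [S SK _] := exists_other set0 set0.
by exists S => //; split=> // /(nctdp_le_lift SK).
Qed.

End IsoFamily.

Section Code.
Variables (V : finType) (e : rel V) (C X : {set V}) (t : nat) (v0 : V).

Definition code_type := ('I_t.+1 * {ffun 'I_t * 'I_t -> bool}
  * {ffun 'I_t * 'I_#|X| -> bool} * {ffun 'I_t -> bool})%type.

(* Read along [enum S]; positions beyond [#|S|] are padded with [v0]. *)
Definition code (S : {set V}) : code_type :=
  (inord #|S|, [ffun ij : 'I_t * 'I_t => e (nth v0 (enum S) ij.1) (nth v0 (enum S) ij.2)],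
   [ffun ij : 'I_t * 'I_#|X| => e (nth v0 (enum X) ij.2) (nth v0 (enum S) ij.1)],
   [ffun i : 'I_t => nth v0 (enum S) i \in C]).

Definition enum_iso (Sa Sb : {set V}) (s : V) := nth s (enum Sb) (index s (enum Sa)).

Lemma index_enum_lt (S : {set V}) s : s \in S -> index s (enum S) < #|S|.
Proof. by move=> sS; rewrite cardE index_mem mem_enum. Qed.

Lemma nth_index_enum (S : {set V}) s : s \in S -> nth v0 (enum S) (index s (enum S)) = s.
Proof. by move=> sS; rewrite nth_index // mem_enum. Qed.

Lemma code_iso (Sa Sb : {set V}) : #|Sa| <= t -> #|Sb| <= t -> code Sa = code Sb ->
  iso_over e C X Sa Sb (enum_iso Sa Sb) (enum_iso Sb Sa).
Proof.
move=> ha hb E.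
have Ecard : #|Sa| = #|Sb|.
  by have := congr1 (fun c : code_type => nat_of_ord c.1.1.1) E; rewrite /= !inordK.
have idx_lt s : s \in Sa -> index s (enum Sa) < size (enum Sb).
  by rewrite -cardE -Ecard; apply: index_enum_lt.
have isoE s : s \in Sa -> enum_iso Sa Sb s = nth v0 (enum Sb) (index s (enum Sa)).
  by move=> sS; rewrite /enum_iso (set_nth_default v0) ?idx_lt.
have ord s : s \in Sa -> index s (enum Sa) < t.
  by move=> sS; apply: leq_trans ha; apply: index_enum_lt.
split.
- by move=> s sS; rewrite isoE // -mem_enum mem_nth ?idx_lt.
- move=> s sS; rewrite isoE // /enum_iso (index_uniq _ (idx_lt s sS) (enum_uniq _)).
  by rewrite nth_index ?mem_enum.
- move=> s s' sS s'S.
  have := congr1 (fun c : code_type => c.1.1.2 (Ordinal (ord s sS), Ordinal (ord s' s'S))) E.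
  by rewrite /= !ffunE /= !nth_index_enum // -!isoE // => ->.
- move=> x xX s sS; have xi : index x (enum X) < #|X| by apply: index_enum_lt.
  have := congr1 (fun c : code_type => c.1.2 (Ordinal (ord s sS), Ordinal xi)) E.
  by rewrite /= !ffunE /= !nth_index_enum // -!isoE // => ->.
- move=> s sS; have := congr1 (fun c : code_type => c.2 (Ordinal (ord s sS))) E.
  by rewrite /= !ffunE /= !nth_index_enum // -!isoE // => ->.
Qed.

Lemma card_code_type : #|{: code_type}| = t.+1 * 2 ^ (t * t) * 2 ^ (t * #|X|) * 2 ^ t.
Proof. by rewrite !card_prod !card_ffun !card_prod !card_ord card_bool. Qed.

End Code.

Lemma pigeonhole_fiber (T U : finType) (f : T -> U) (A : {set T}) m :
  #|U| * m < #|A| -> exists c, m < #|[set x in A | f x == c]|.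
Proof.
move=> big; apply/existsP; apply: contraLR big; rewrite negb_exists -leqNgt => /forallP small.
rewrite -sum1_card (partition_big f xpredT) //= -sum_nat_const.
apply: leq_sum => c _; rewrite sum1_card; move: (small c); rewrite -leqNgt.
by apply/leq_trans/eq_leq/eq_card => x; rewrite !inE.
Qed.

Lemma code_count_bound t p : 0 < p + t ->
  t.+1 * 2 ^ (t * t) * 2 ^ (t * p) * 2 ^ t * (2 ^ p + 1)
  <= (p + t) * 2 ^ ((p + t) ^ 2) * 2 ^ (2 * t + p + 1).
Proof.
move=> pt0.
have h1 : t.+1 <= 2 ^ t by apply: ltn_expl.
have h2 : 2 ^ p + 1 <= 2 ^ (p + 1) by rewrite expnD expn1 muln2 -addnn leq_add2l expn_gt0.
apply: leq_trans (_ : 2 ^ t * 2 ^ (t * t) * 2 ^ (t * p) * 2 ^ t * 2 ^ (p + 1) <= _).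
  by rewrite !leq_mul.
rewrite -!expnD -mulnA -expnD; apply: leq_trans (leq_pmull _ pt0).
by apply: leq_pexp2l => //; nia.
Qed.

Lemma exists_iso_family (V : finType) (e : rel V) (C X : {set V}) (A : {set {set V}})
    (t : nat) (v0 : V) :
  {in A, forall S : {set V}, #|S| <= t} -> #|{: code_type X t}| * (2 ^ #|X| + 1) < #|A| ->
  exists2 K : {set {set V}}, K \subset A &
    {in K &, forall Sa Sb, iso_over e C X Sa Sb (enum_iso Sa Sb) (enum_iso Sb Sa)}
    /\ 2 ^ #|X| + 2 <= #|K|.
Proof.
move=> tA /(pigeonhole_fiber (code e C X t v0)) [c big].
exists [set S in A | code e C X t v0 S == c]; first by apply/subsetP => S; rewrite inE => /andP [].
split; last by move: big; rewrite addn1 addn2.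
move=> Sa Sb; rewrite !inE => /andP [aA /eqP ca] /andP [bA /eqP cb].
by apply: (@code_iso V e C X t v0 Sa Sb (tA _ aA) (tA _ bA)); rewrite ca cb.
Qed.

Theorem lemma2 (V : finType) (e : rel V) (C X : {set V}) (A : {set {set V}})
    (k : nat) :
  simple_graph e ->
  0 < k ->
  (forall S, S \in A -> is_component e X S) ->
  let l := #|A| in
  let t := \max_(S in A) #|S| in
  (#|X| + t) * 2 ^ ((#|X| + t) ^ 2) * 2 ^ (2 * t + #|X| + 1) < l ->
  exists2 S, S \in A &
    (nctdp_le [set cnbhd e v | v in C] k <->
     nctdp_le [set cnbhd e v :\: S | v in C :\: S] k).
Proof.
move=> [esym _] _ Acomp l t big.
have tA : {in A, forall S : {set V}, #|S| <= t} by move=> S SA; rewrite /t (bigD1 S) ?leq_maxl.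
have /card_gt0P [S0 S0A] : 0 < #|A| by apply: leq_ltn_trans big.
have [S0_ne _ _ _] := Acomp S0 S0A; have /set0Pn [v0 _] := S0_ne.
have t0 : 0 < #|X| + t by rewrite addn_gt0 (leq_trans _ (tA _ S0A)) ?orbT ?card_gt0.
have codes_few : #|{: code_type X t}| * (2 ^ #|X| + 1) < #|A|.
  by rewrite card_code_type; apply: leq_ltn_trans (code_count_bound t0) big.
have [K KA [Kiso Kbig]] := exists_iso_family e C v0 tA codes_few.
have Kcomp : {in K, forall S, is_component e X S} by move=> S /(subsetP KA) /Acomp.
have [S SK equiv] := iso_family_reduction esym Kcomp Kiso Kbig k.
by exists S; first exact: subsetP KA S SK.
Qed.
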